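(* Let $k\ge 2$ and let $a$ be a nonnegative integer with $a\le k-2$ and $a+k-1$ odd. Let $P(x_1,\dots,x_k)=\operatorname{sign}(a x_1+x_2+\cdots+x_k)$ and $\tau=\lfloor (k-a-1)/2\rfloor$. Then: (1) $\hat P_{\{1\}}=1-\frac{1}{2^{k-2}}\sum_{l=0}^{\tau}\binom{k-1}{l}$; (2) for every odd $t$ with $1\le t\le k-1$ and every set $I\subseteq\{2,\dots,k\}$ with $|I|=t$, \[\hat P_I=\frac{1}{2^{k-2}}\sum_{i=0}^{\tau}\sum_{j=0}^{\tau-i}(-1)^j\binom{k-t-1}{i}\binom{t}{j};\] (3) for every even $t$ with $2\le t\le k-1$ and every set $I=\{1\}\cup J$ with $J\subseteq\{2,\dots,k\}$, $|J|=t$, \[\hat P_I=-\frac{1}{2^{k-2}}\sum_{i=0}^{\tau}\sum_{j=0}^{\tau-i}(-1)^j\binom{k-t-1}{i}\binom{t}{j}.\]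
   Context: For $P:\{-1,1\}^k\to\{-1,1\}$ and $I\subseteq[k]$, the Fourier coefficient is $\hat P_I=\mathbb{E}_{x\in\{-1,1\}^k}[P(x)\prod_{i\in I}x_i]$ with $x$ uniform. Index $1$ is called the president and indices $2,\dots,k$ the citizens. *)

(* Index set [k] is modelled by 'I_k; the paper's index 1
   (president) is the ordinal with value 0, indices 2..k are values 1..k-1. *)
From HB Require Import structures.
From mathcomp Require Import all_boot all_order all_algebra.
Unset Printing Implicit Defensive.
Import Order.TTheory GRing.Theory Num.Theory.
Local Open Scope ring_scope.

(* A point of {-1,1}^k is encoded by a boolean vector; true ↦ 1, false ↦ -1. *)
Definition pm1 (b : bool) : rat := if b then 1 else -1.

Definition fourier (k : nat) (P : {ffun 'I_k -> bool} -> rat) (I : {set 'I_k}) : rat :=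
  (#|{ffun 'I_k -> bool}|%:R)^-1 *
    \sum_(x : {ffun 'I_k -> bool}) P x * \prod_(i in I) pm1 (x i).

Definition president (k : nat) : {set 'I_k} := [set i : 'I_k | val i == 0%N].

Definition weighted_maj (k a : nat) (x : {ffun 'I_k -> bool}) : rat :=
  Num.sg (\sum_(i : 'I_k) (if val i == 0%N then a%:R else 1) * pm1 (x i)).

From HB Require Import structures.
From mathcomp Require Import all_boot all_order all_algebra.
From mathcomp Require Import zify ring lra.
Import Order.TTheory GRing.Theory Num.Theory.
Local Open Scope ring_scope.

(* Write chi_I(x) = prod_(i in I) x_i and let z be the president.  P is an odd
   function, so for |I| odd the pairing x <-> -x folds the Fourier sum onto the
   half cube H = {x | x_z = -1}.  On H the sign is explicit: with m the number of
   citizens voting -1, the vote is (k - 1 - a) - 2m, and since k - 1 = a + 2 tau + 1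
   we get P(x) = 1 if m <= tau and -1 otherwise, i.e. P = 2 [m <= tau] - 1 on H.
   Every character of the theorem restricts to +-chi_J on H, J a set of citizens.
   The term sum_H chi_J vanishes for J nonempty (flip one coordinate of J) and is
   2^(k-1) for J empty.  The threshold term sum_(x in H, m <= tau) chi_J(x) is
   computed by encoding x in H as the pair (A, B) of its -1 citizens inside and
   outside J: it equals sum_(i + j <= tau) (-1)^j C(k-1-|J|, i) C(|J|, j). *)

Definition binom_conv (tau n t : nat) : rat :=
  \sum_(0 <= i < tau.+1) \sum_(0 <= j < (tau - i).+1)
     (-1) ^+ j * ('C(n, i))%:R * ('C(t, j))%:R.

Lemma pm1N (b : bool) : pm1 (~~ b) = - pm1 b.
Proof. by case: b; rewrite /pm1 ?opprK. Qed.

Section Cube.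

Variable k : nat.
Local Notation cube := {ffun 'I_k -> bool}.
Implicit Types (x : cube) (A B I J : {set 'I_k}) (z : 'I_k).

Definition chi I x : rat := \prod_(i in I) pm1 (x i).

Definition neg x : cube := [ffun i => ~~ x i].
Definition flip (j : 'I_k) x : cube := [ffun i => if i == j then ~~ x i else x i].

Lemma negK : involutive neg.
Proof. by move=> x; apply/ffunP=> i; rewrite !ffunE negbK. Qed.

Lemma flipK (j : 'I_k) : involutive (flip j).
Proof. by move=> x; apply/ffunP=> i; rewrite !ffunE; case: eqP; rewrite ?negbK. Qed.

Lemma chi_neg I x : chi I (neg x) = (-1) ^+ #|I| * chi I x.
Proof. by rewrite /chi -prodrN; apply: eq_bigr => i _; rewrite ffunE pm1N. Qed.

Lemma chi_flip I (j : 'I_k) x : j \in I -> chi I (flip j x) = - chi I x.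
Proof.
move=> jI; rewrite /chi !(bigD1 j jI) /= ffunE eqxx pm1N mulNr.
by congr (- (_ * _)); apply: eq_bigr => i /andP[_ /negbTE ij]; rewrite ffunE ij.
Qed.

Lemma weighted_maj_neg a x : weighted_maj k a (neg x) = - weighted_maj k a x.
Proof.
rewrite /weighted_maj -sgrN -sumrN; congr Num.sg.
by apply: eq_bigr => i _; rewrite ffunE pm1N mulrN.
Qed.

Lemma card_cube : #|{: cube}|%:R = (2 : rat) ^+ k.
Proof. by rewrite card_ffun card_bool card_ord natrX. Qed.

Lemma sum_cube_halves z (F : cube -> rat) :
  \sum_(x : cube) F x = \sum_(x : cube | ~~ x z) (F x + F (neg x)).
Proof.
rewrite (bigID (fun x : cube => x z)) /= addrC big_split /=; congr (_ + _).
rewrite (reindex neg) /=; last by exists neg => y _; rewrite negK.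
by apply: eq_bigl => y; rewrite ffunE.
Qed.

Lemma fourier_odd z (P : cube -> rat) I :
  (forall x, P (neg x) = - P x) -> odd #|I| ->
  fourier k P I = 2 / 2 ^+ k * \sum_(x : cube | ~~ x z) P x * chi I x.
Proof.
move=> Podd oddI; have chiE (y : cube) : \prod_(i in I) pm1 (y i) = chi I y by [].
rewrite /fourier card_cube (sum_cube_halves z) !mulr_sumr; apply: eq_bigr => x _.
by rewrite !chiE chi_neg Podd -signr_odd oddI; ring.
Qed.

(* Over the half cube, chi_J sums to zero as soon as J contains a coordinate j
   other than z: flipping x_j is a sign-reversing involution. *)
Lemma sum_half_chi_eq0 z J (j : 'I_k) : j \in J -> j != z ->
  \sum_(x : cube | ~~ x z) chi J x = 0.
Proof.
move=> jJ jz; set S := \sum_(x | _) _.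
suff : S = - S by lra.
rewrite {1}/S (reindex (flip j)) /=; last by exists (flip j) => y _; rewrite flipK.
rewrite /S -sumrN; apply: eq_big => [y|y _]; last by rewrite chi_flip.
by rewrite ffunE eq_sym (negbTE jz).
Qed.

(* chi_set0 = 1, so its sum counts the 2^(k-1) points of the half cube. *)
Lemma sum_half_chi_set0 z : \sum_(x : cube | ~~ x z) chi set0 x = 2 ^+ k / 2.
Proof.
under eq_bigr do rewrite /chi big_set0.
have := sum_cube_halves z (fun _ => 1); rewrite sumr_const card_cube big_split /=.
by move=> ->; field.
Qed.

Definition minus_count z x : nat := #|[set i | (i != z) && ~~ x i]|.

(* On the half cube where the president (weight a) votes -1, the vote is
   (k - 1 - a) - 2m with m = minus_count; it is positive iff m <= tau. *)
Lemma weighted_maj_half a tau z x : val z = 0%N -> ~~ x z ->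
  (k - 1 = a + tau.*2.+1)%N ->
  weighted_maj k a x = if (minus_count z x <= tau)%N then 1 else -1.
Proof.
move=> z0 xz htau; rewrite /weighted_maj (bigD1 z) //= z0 eqxx (negbTE xz) /pm1 /=.
have citizen i : i != z -> (val i == 0%N) = false.
  by move=> iz; apply: contraNF iz => /eqP i0; apply/eqP/val_inj; rewrite /= i0 z0.
have -> : \sum_(i < k | i != z) (if val i == 0%N then a%:R else 1) * pm1 (x i)
    = \sum_(i < k | i != z) (1 - 2 * (if ~~ x i then 1 else 0) : rat).
  by apply: eq_bigr => i iz; rewrite citizen // mul1r /pm1; case: (x i) => /=; lra.
rewrite sumrB -mulr_sumr -big_mkcondr !sumr_const cardC1 card_ord -subn1 htau.
rewrite -[#|_|]cardsE -/(minus_count z x); set m := minus_count z x.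
have -> : a%:R * -1 + ((a + tau.*2.+1)%:R - 2 * m%:R)
    = (tau.*2.+1)%:R - (m.*2)%:R :> rat.
  by rewrite -!muln2 -!natr1 !natrD !natrM; lra.
by case: ifP => hm; [apply: gtr0_sg | apply: ltr0_sg];
  rewrite ?subr_gt0 ?subr_lt0 ltr_nat; lia.
Qed.

(* A point of the half cube is determined by its sets A (inside J) and B
   (outside z |: J) of coordinates equal to -1. *)
Definition point_of_pair z (p : {set 'I_k} * {set 'I_k}) : cube :=
  [ffun i => (i != z) && (i \notin p.1) && (i \notin p.2)].
Definition pair_of_point J (K : {set 'I_k}) x : {set 'I_k} * {set 'I_k} :=
  ([set i in J | ~~ x i], [set i in K | ~~ x i]).

Lemma sum_half_pairs z J (F : cube -> rat) : z \notin J ->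
  \sum_(x : cube | ~~ x z) F x =
  \sum_(p : {set 'I_k} * {set 'I_k} | (p.1 \subset J) && (p.2 \subset ~: (z |: J)))
     F (point_of_pair z p).
Proof.
move=> zJ; rewrite (reindex_onto (point_of_pair z) (pair_of_point J (~: (z |: J))))
  => [|x xz]; last first.
  apply/ffunP => i; rewrite !ffunE /= !inE.
  case: (eqVneq i z) => [->|iz]; first by rewrite (negbTE xz).
  by case: (i \in J); case: (x i).
apply: eq_bigl => -[A B]; rewrite ffunE eqxx /= /pair_of_point xpair_eqE.
apply/andP/andP => [[/eqP <- /eqP <-] | [sA sB]].
  by split; apply/subsetP => i; rewrite inE => /andP[].
have Jz i : i \in J -> i != z by move=> iJ; apply: contraNneq zJ => <-.
split; apply/eqP/setP => i; rewrite !inE ffunE /=;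
  move: (Jz i) (subsetP sA i) (subsetP sB i); rewrite !inE => /implyP + /implyP + /implyP;
  by case: (i \in J); case: (i \in A); case: (i \in B); case: (i == z).
Qed.

Lemma point_of_pair_stats z J A B :
  z \notin J -> A \subset J -> B \subset ~: (z |: J) ->
  minus_count z (point_of_pair z (A, B)) = (#|A| + #|B|)%N /\
  chi J (point_of_pair z (A, B)) = (-1) ^+ #|A|.
Proof.
move=> zJ sA sB.
have inA i : i \in A -> (i \in J) && (i != z).
  by move=> /(subsetP sA) iJ; rewrite iJ; apply: contraNneq zJ => <-.
have inB i : i \in B -> (i \notin J) && (i != z).
  by move=> /(subsetP sB); rewrite !inE negb_or => /andP[-> ->].
split.
  rewrite /minus_count.
  have -> : [set i | (i != z) && ~~ point_of_pair z (A, B) i] = A :|: B.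
    apply/setP => i; rewrite !inE ffunE /=.
    case iA: (i \in A); first by case/andP: (inA i iA) => _ ->.
    case iB: (i \in B); first by case/andP: (inB i iB) => _ ->.
    by case: (i != z).
  rewrite cardsU; suff -> : A :&: B = set0 by rewrite cards0 subn0.
  apply/setP => i; rewrite !inE; apply/negbTE/andP => -[iA iB].
  by case/andP: (inA i iA) => iJ _; case/andP: (inB i iB); rewrite iJ.
rewrite /chi -prodr_const.
transitivity (\prod_(i in J) (if i \in A then -1 else 1 : rat)).
  apply: eq_bigr => i iJ; rewrite ffunE /= /pm1.
  have iz : i != z by apply: contraNneq zJ => <-.
  have iB : i \notin B by apply/negP => /inB; rewrite iJ.
  by rewrite iz iB andbT; case: (i \in A).
rewrite -big_mkcondr /=; apply: eq_bigl => i.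
case iA: (i \in A); last by rewrite andbF.
by case/andP: (inA i iA) => -> _.
Qed.

End Cube.

Arguments chi {k}.
Arguments minus_count {k}.

Section BinomialSums.

Variable R : comPzRingType.

Lemma sum_subsets (T : finType) (J : {set T}) (g : nat -> R) :
  \sum_(A : {set T} | A \subset J) g #|A| =
  \sum_(0 <= j < #|J|.+1) ('C(#|J|, j))%:R * g j.
Proof.
rewrite big_mkord (partition_big (fun A : {set T} => inord #|A| : 'I_#|J|.+1) predT) //=.
apply: eq_bigr => j _.
transitivity (\sum_(A : {set T} | (A \subset J) && (#|A| == j)) g j).
  apply: eq_big => [A|A /andP[sA /eqP <-]]; last by rewrite inordK // ltnS subset_leq_card.
  case sA: (A \subset J) => //=; have le := subset_leq_card sA.
  by apply/eqP/eqP => [<-|h]; [rewrite inordK | apply: val_inj; rewrite /= -h inordK].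
rewrite sumr_const mulr_natl -cards_draws; congr (_ *+ _).
by apply: eq_card => B; rewrite inE.
Qed.

Lemma sum_nat_widen (f : nat -> R) n N : (n <= N)%N ->
  (forall j, (n <= j < N)%N -> f j = 0) ->
  \sum_(0 <= j < n) f j = \sum_(0 <= j < N) f j.
Proof.
move=> nN f0; rewrite [RHS](@big_cat_nat _ _ _ n) //= [X in _ = _ + X]big1_seq ?addr0 //.
by move=> j /andP[_]; rewrite mem_index_iota; apply: f0.
Qed.

(* Both sides are the sum of (-1)^j C(n, i) C(t, j) over the triangle i + j <= tau. *)
Lemma sum_binom_triangle (n t tau : nat) :
  \sum_(0 <= j < t.+1) ('C(t, j))%:R *
     \sum_(0 <= i < n.+1) ('C(n, i))%:R * (if (j + i <= tau)%N then (-1) ^+ j else 0)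
  = \sum_(0 <= i < tau.+1) \sum_(0 <= j < (tau - i).+1)
       (-1) ^+ j * ('C(n, i))%:R * ('C(t, j))%:R :> R.
Proof.
pose N := (n + t + tau).+1.
pose F i j : R := if (j + i <= tau)%N then (-1) ^+ j * ('C(n, i))%:R * ('C(t, j))%:R else 0.
transitivity (\sum_(0 <= i < N) \sum_(0 <= j < N) F i j).
  rewrite exchange_big (sum_nat_widen _ t.+1 N); last 2 first.
  - by rewrite /N; lia.
  - by move=> j /andP[tj _]; rewrite bin_small // mul0r.
  apply: eq_bigr => j _; rewrite (sum_nat_widen _ n.+1 N); last 2 first.
  - by rewrite /N; lia.
  - by move=> i /andP[ni _]; rewrite bin_small // mul0r.
  rewrite mulr_sumr; apply: eq_bigr => i _.
  by rewrite /F; case: ifP => _; rewrite ?mulr0 //; ring.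
rewrite -(sum_nat_widen _ tau.+1 N); last 2 first.
- by rewrite /N; lia.
- by move=> i /andP[taui _]; apply: big1 => j _; rewrite /F ifF //; lia.
apply: eq_big_nat => i /andP[_ itau]; symmetry.
rewrite (eq_big_nat _ _ (F2 := F i)) => [|j /andP[_ j_le]]; last by rewrite /F ifT //; lia.
apply: sum_nat_widen => [|j /andP[j_gt _]]; first by rewrite /N; lia.
by rewrite /F ifF //; lia.
Qed.

End BinomialSums.

Lemma sum_half_threshold k (z : 'I_k) (J : {set 'I_k}) tau : z \notin J ->
  \sum_(x : {ffun 'I_k -> bool} | ~~ x z)
     (if (minus_count z x <= tau)%N then chi J x else 0)
  = binom_conv tau (k - #|J| - 1) #|J|.
Proof.
move=> zJ; set K := ~: (z |: J).
have cardK : #|K| = (k - #|J| - 1)%N.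
  have := cardsC (z |: J); rewrite cardsU1 zJ card_ord -/K.
  by move: #|K| #|J| => nK nJ; lia.
rewrite (sum_half_pairs _ _ _ _ zJ) /binom_conv -cardK -sum_binom_triangle.
transitivity (\sum_(A : {set 'I_k} | A \subset J) \sum_(B : {set 'I_k} | B \subset K)
   (if (#|A| + #|B| <= tau)%N then (-1) ^+ #|A| else 0 : rat)).
  rewrite pair_big /=; apply: eq_bigr => -[A B] /andP[sA sB] /=.
  by have [-> ->] := point_of_pair_stats _ _ _ _ _ zJ sA sB.
transitivity (\sum_(A : {set 'I_k} | A \subset J) \sum_(0 <= i < #|K|.+1)
   ('C(#|K|, i))%:R * (if (#|A| + i <= tau)%N then (-1) ^+ #|A| else 0 : rat)).
  apply: eq_bigr => A _.
  exact: (sum_subsets _ _ K (fun b => if (#|A| + b <= tau)%N then (-1) ^+ #|A| else 0)).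
exact: (sum_subsets _ _ J (fun a => \sum_(0 <= i < #|K|.+1)
   ('C(#|K|, i))%:R * (if (a + i <= tau)%N then (-1) ^+ a else 0 : rat))).
Qed.

Lemma fourier_weighted_maj {k a tau : nat} {z : 'I_k} (I J : {set 'I_k}) (s : rat) :
  val z = 0%N -> (k - 1 = a + tau.*2.+1)%N -> z \notin J -> odd #|I| ->
  (forall x : {ffun 'I_k -> bool}, ~~ x z -> chi I x = s * chi J x) ->
  fourier k (weighted_maj k a) I =
  2 / 2 ^+ k * s * (2 * binom_conv tau (k - #|J| - 1) #|J|
                    - \sum_(x : {ffun 'I_k -> bool} | ~~ x z) chi J x).
Proof.
move=> z0 htau zJ oddI IJ.
rewrite (fourier_odd _ z) //; last exact: weighted_maj_neg.
rewrite -(sum_half_threshold _ z) // !mulr_sumr -sumrB mulr_sumr.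
apply: eq_bigr => x xz; rewrite (weighted_maj_half _ _ _ _ _ z0 xz htau) IJ //.
by case: ifP => _; ring.
Qed.

Lemma tau_spec {k a : nat} : (a <= k - 2)%N -> odd (a + k - 1) ->
  (k - 1 = a + ((k - a - 1)./2).*2.+1)%N.
Proof.
move=> ha hodd.
have e : (a + k - 1 = (k - a - 1) + a.*2)%N by rewrite -addnn; lia.
rewrite e oddD odd_double addbF in hodd.
by have := odd_double_half (k - a - 1); rewrite hodd -!muln2; lia.
Qed.

Lemma binom_conv0 tau n : binom_conv tau n 0 = \sum_(0 <= l < tau.+1) ('C(n, l))%:R.
Proof.
apply: eq_bigr => i _; rewrite big_nat_recl // big1 => [|j _]; last by rewrite bin0n mulr0.
by rewrite expr0 bin0 mul1r mulr1 addr0.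
Qed.

Theorem lemma2p1 (k a : nat) (hk : (2 <= k)%N) (ha : (a <= k - 2)%N)
    (hodd : odd (a + k - 1)) :
  let P := weighted_maj k a in
  let tau := ((k - a - 1)./2)%N in
  let S (t : nat) : rat :=
    \sum_(0 <= i < tau.+1) \sum_(0 <= j < (tau - i).+1)
       (-1) ^+ j * ('C(k - t - 1, i))%:R * ('C(t, j))%:R in
  [/\ fourier k P (president k) =
        1 - (2%:R ^+ (k - 2))^-1 * \sum_(0 <= l < tau.+1) ('C(k - 1, l))%:R,
      (forall (t : nat) (I : {set 'I_k}), odd t -> (1 <= t <= k - 1)%N ->
         (forall i, i \in I -> val i != 0%N) -> #|I| = t ->
         fourier k P I = (2%:R ^+ (k - 2))^-1 * S t)
    & (forall (t : nat) (J : {set 'I_k}), ~~ odd t -> (2 <= t <= k - 1)%N ->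
         (forall i, i \in J -> val i != 0%N) -> #|J| = t ->
         fourier k P (president k :|: J) = - ((2%:R ^+ (k - 2))^-1 * S t))].
Proof.
move=> P tau S.
pose z : 'I_k := Ordinal (ltnW hk).
have z0 : val z = 0%N by [].
have pres : president k = [set z] by apply/setP => i; rewrite !inE -val_eqE.
have htau : (k - 1 = a + tau.*2.+1)%N := tau_spec ha hodd.
have citizens (I : {set 'I_k}) : (forall i, i \in I -> val i != 0%N) -> z \notin I.
  by move=> hI; apply/negP => /hI; rewrite z0.
have half_eq0 (I : {set 'I_k}) : (forall i, i \in I -> val i != 0%N) -> (0 < #|I|)%N ->
    \sum_(x : {ffun 'I_k -> bool} | ~~ x z) chi I x = 0.
  move=> hI /card_gt0P[j jI]; apply: (sum_half_chi_eq0 _ _ _ _ jI).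
  by apply: contraNneq (hI j jI) => ->.
have pow2 : (2 : rat) ^+ k = 2 ^+ (k - 2) * 4 by rewrite -{1}(subnK hk) exprD.
have pow2_neq0 : (2 : rat) ^+ (k - 2) != 0 by rewrite expf_neq0.
split.
- rewrite pres (fourier_weighted_maj [set z] set0 (-1) z0 htau) ?inE ?cards1 //;
    last by move=> x xz; rewrite /chi big_set1 big_set0 (negbTE xz) mulr1.
  by rewrite sum_half_chi_set0 cards0 subn0 binom_conv0 pow2; field.
- move=> t I oddt ht hI cardI.
  rewrite (fourier_weighted_maj I I 1 z0 htau) ?citizens ?cardI //;
    last by move=> x _; rewrite mul1r.
  have I_gt0 : (0 < #|I|)%N by rewrite cardI; case/andP: ht.
  by rewrite half_eq0 // pow2 /S -/(binom_conv tau _ t); field.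
- move=> t J event ht hJ cardJ.
  have zJ := citizens J hJ.
  rewrite pres (fourier_weighted_maj (z |: J) J (-1) z0 htau) //; first last.
  + by move=> x xz; rewrite /chi big_setU1 //= (negbTE xz).
  + by rewrite cardsU1 zJ cardJ /= (negbTE event).
  have J_gt0 : (0 < #|J|)%N by rewrite cardJ; case/andP: ht => /ltnW.
  by rewrite half_eq0 // cardJ pow2 /S -/(binom_conv tau _ t); field.
Qed.
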